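(* Let $X$ be a Tychonoff space. Every non-zero minimal ideal $I$ of $T''(X)$ is generated by an idempotent $e\in T''(X)$ such that $X\setminus Z(e)$ contains exactly one element.
   Context: $C(X)$ is the ring of real-valued continuous functions on $X$; a cozero set is a set $\{x: h(x)\neq 0\}$ with $h\in C(X)$. $T''(X)$ is the ring (under pointwise operations) of all functions $f\colon X\to\mathbb{R}$ for which there is a dense cozero set $U$ of $X$ with $f|_U$ continuous. $Z(f)=\{x\in X: f(x)=0\}$. A minimal ideal is a non-zero ideal not properly containing any non-zero ideal. *)

From HB Require Import structures.
From mathcomp Require Import all_boot all_order all_algebra.
From mathcomp Require Import all_classical all_reals all_analysis.
Set Implicit Arguments. Unset Strict Implicit. Unset Printing Implicit Defensive.
Import Order.TTheory GRing.Theory Num.Theory.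
Import numFieldTopology.Exports numFieldNormedType.Exports.
Local Open Scope classical_set_scope.
Local Open Scope ring_scope.

Definition tychonoff_space (R : realType) (X : topologicalType) : Prop :=
  hausdorff_space X /\
  forall (a : X) (B : set X), closed B -> ~ B a ->
    exists f : X -> R, [/\ continuous f, f a = 0 & forall b, B b -> f b = 1].

Definition coz (R : realType) (X : topologicalType) (h : X -> R) : set X :=
  [set x | h x != 0].

Definition Zset (R : realType) (X : Type) (f : X -> R) : set X :=
  [set x | f x = 0].

(* f belongs to T''(X): continuous on some dense cozero set *)
Definition Tpp (R : realType) (X : topologicalType) (f : X -> R) : Prop :=
  exists h : X -> R, [/\ continuous h, dense (coz h) &
                        {within coz h, continuous f}].

Definition Tpp_ideal (R : realType) (X : topologicalType) (I : set (X -> R)) : Prop :=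
  [/\ (forall f, I f -> Tpp f),
      I (fun _ => 0),
      (forall f g, I f -> I g -> I (fun x => f x + g x)),
      (forall f, I f -> I (fun x => - f x)) &
      (forall h f, Tpp h -> I f -> I (fun x => h x * f x))].

Definition nonzero_fset (R : realType) (X : Type) (I : set (X -> R)) : Prop :=
  exists f, I f /\ f <> (fun _ => 0).

Definition Tpp_minimal_ideal (R : realType) (X : topologicalType)
    (I : set (X -> R)) : Prop :=
  [/\ Tpp_ideal I, nonzero_fset I &
      forall J : set (X -> R), Tpp_ideal J -> nonzero_fset J -> J `<=` I -> J = I].

Definition Tpp_gen (R : realType) (X : topologicalType) (e : X -> R) : set (X -> R) :=
  [set g | exists h, Tpp h /\ g = (fun x => h x * e x)].

(* If [I] is minimal, any [g] in [I] that is non-zero somewhere generates [I].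
   Applied to [f^2] this gives [f = h f^2], so [e = h f] is an idempotent
   generator.  If [e] were non-zero at two points [x0 <> y], multiply it by a
   continuous [s] with [s y = 0] and [s x0 = 1]: [s e] still generates [I], so
   [e = k s e] vanishes at [y]. *)
From HB Require Import structures.
From mathcomp Require Import all_boot all_order all_algebra.
From mathcomp Require Import all_classical all_reals all_analysis.
From mathcomp Require Import ring.
Set Implicit Arguments. Unset Strict Implicit.
Import Order.TTheory GRing.Theory Num.Theory.
Import numFieldTopology.Exports numFieldNormedType.Exports.
Local Open Scope classical_set_scope.
Local Open Scope ring_scope.

Section TppRing.
Variables (R : realType) (X : topologicalType).
Implicit Types (f g h : X -> R) (I : set (X -> R)).

Lemma coz_open h : continuous h -> open (coz h).
Proof.
move=> hc; have -> : coz h = h @^-1` (~` [set 0]).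
  by apply/seteqP; split=> x /=; rewrite /coz /=; move/eqP.
apply: open_comp => [x _|]; first exact: hc.
rewrite openC; apply: accessible_closed_set1; apply: hausdorff_accessible.
exact: norm_hausdorff.
Qed.

Lemma Tpp_continuous f : continuous f -> Tpp f.
Proof.
move=> fc; exists (fun _ => 1); split; first by move=> x; exact: cst_continuous.
- have -> : coz (fun _ : X => 1 : R) = setT.
    by apply/seteqP; split=> x //= _; rewrite /coz /= oner_neq0.
  by move=> O [x Ox] _; exists x.
- exact: continuous_subspaceT.
Qed.

Lemma Tpp_cst (c : R) : Tpp (fun _ : X => c).
Proof. by apply: Tpp_continuous => x; exact: cst_continuous. Qed.

Lemma coz_mul_subl h1 h2 : coz (fun x => h1 x * h2 x) `<=` coz h1.
Proof. by move=> x; rewrite /coz /= mulf_eq0 negb_or => /andP[]. Qed.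

Lemma coz_mul_subr h1 h2 : coz (fun x => h1 x * h2 x) `<=` coz h2.
Proof. by move=> x; rewrite /coz /= mulf_eq0 negb_or => /andP[]. Qed.

(* Two dense open cozero sets meet in the dense cozero set of the product. *)
Lemma Tpp_op2 (op : R -> R -> R) f g :
  (forall (Y : topologicalType) (a b : Y -> R), continuous a -> continuous b ->
     continuous (fun y => op (a y) (b y))) ->
  Tpp f -> Tpp g -> Tpp (fun x => op (f x) (g x)).
Proof.
move=> opc [h1 [c1 d1 f1]] [h2 [c2 d2 f2]].
exists (fun x => h1 x * h2 x); split.
- by move=> x; exact: (continuousM (c1 x) (c2 x)).
- have -> : coz (fun x => h1 x * h2 x) = coz h1 `&` coz h2.
    apply/seteqP; split=> x.
      by move=> xh; split; [exact: coz_mul_subl xh | exact: coz_mul_subr xh].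
    by rewrite /coz /= mulf_eq0 negb_or => -[-> ->].
  by apply: denseI => //; exact: coz_open.
- apply: opc.
  + exact: continuous_subspaceW (@coz_mul_subl h1 h2) f1.
  + exact: continuous_subspaceW (@coz_mul_subr h1 h2) f2.
Qed.

Lemma TppM f g : Tpp f -> Tpp g -> Tpp (fun x => f x * g x).
Proof. by apply: Tpp_op2 => Y a b ca cb y; exact: (continuousM (ca y) (cb y)). Qed.

Lemma TppD f g : Tpp f -> Tpp g -> Tpp (fun x => f x + g x).
Proof. by apply: Tpp_op2 => Y a b ca cb y; exact: (continuousD (ca y) (cb y)). Qed.

Lemma TppN f : Tpp f -> Tpp (fun x => - f x).
Proof.
move=> Tf; have -> : (fun x => - f x) = (fun x => -1 * f x).
  by apply: funext => x; rewrite mulN1r.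
exact: TppM (Tpp_cst _) Tf.
Qed.

Lemma Tpp_gen_ideal g : Tpp g -> Tpp_ideal (Tpp_gen g).
Proof.
move=> Tg; split.
- by move=> _ [h [Th ->]]; exact: TppM.
- exists (fun _ => 0); split; first exact: Tpp_cst.
  by apply: funext => x; rewrite mul0r.
- move=> _ _ [h1 [T1 ->]] [h2 [T2 ->]]; exists (fun x => h1 x + h2 x).
  by split; [exact: TppD | apply: funext => x; rewrite mulrDl].
- move=> _ [h [Th ->]]; exists (fun x => - h x).
  by split; [exact: TppN | apply: funext => x; rewrite mulNr].
- move=> k _ Tk [h [Th ->]]; exists (fun x => k x * h x).
  by split; [exact: TppM | apply: funext => x; rewrite mulrA].
Qed.

Lemma Tpp_gen_refl g : Tpp_gen g g.
Proof.
exists (fun _ => 1); split; first exact: Tpp_cst.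
by apply: funext => x; rewrite mul1r.
Qed.

Lemma Tpp_gen_sub I g : Tpp_ideal I -> I g -> Tpp_gen g `<=` I.
Proof. by move=> [_ _ _ _ IM] Ig _ [h [Th ->]]; exact: IM. Qed.

Lemma minimal_ideal_principal I g x :
  Tpp_minimal_ideal I -> I g -> g x != 0 -> I = Tpp_gen g.
Proof.
move=> [II _ Imin] Ig gx; have [ITpp _ _ _ _] := II.
apply/esym/Imin; [exact/Tpp_gen_ideal/ITpp | | exact: Tpp_gen_sub].
by exists g; split; [exact: Tpp_gen_refl | move=> g0; rewrite g0 eqxx in gx].
Qed.

Lemma minimal_ideal_regular I f x :
  Tpp_minimal_ideal I -> I f -> f x != 0 ->
  exists h, Tpp h /\ forall y, f y = h y * (f y * f y).
Proof.
move=> Imi If fx; have [[ITpp _ _ _ IM] _ _] := Imi.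
have If2 : I (fun y => f y * f y) by apply: IM => //; exact: ITpp.
have : Tpp_gen (fun y => f y * f y) f.
  by rewrite -(minimal_ideal_principal Imi If2 (mulf_neq0 fx fx)).
by move=> [h [Th fE]]; exists h; split=> // y; rewrite {1}fE.
Qed.

Lemma separate_points : tychonoff_space R X -> forall x0 y : X, x0 <> y ->
  exists s : X -> R, [/\ continuous s, s y = 0 & s x0 = 1].
Proof.
move=> [hX sep] x0 y neq.
have cl : closed [set x0] by exact: accessible_closed_set1 (hausdorff_accessible hX) _.
have [s [sc sy sx0]] := sep y [set x0] cl (nesym neq).
by exists s; split=> //; exact: sx0.
Qed.

Lemma minimal_ideal_support I f g x0 y : tychonoff_space R X ->
  Tpp_minimal_ideal I -> I f -> I g -> f x0 != 0 -> g y != 0 -> y = x0.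
Proof.
move=> tX Imi If Ig fx0 gy; have [[_ _ _ _ IM] _ _] := Imi.
apply/not_notP => /nesym /(separate_points tX) [s [sc sy sx0]].
have Isf : I (fun x => s x * f x) by apply: IM => //; exact: Tpp_continuous.
have : Tpp_gen (fun x => s x * f x) g.
  by rewrite -(minimal_ideal_principal Imi Isf (x := x0)) // sx0 mul1r.
move=> [k [_ /(congr1 (fun F => F y))]] /=; rewrite sy mul0r mulr0 => gy0.
by rewrite gy0 eqxx in gy.
Qed.

End TppRing.

Theorem theorem5p0 (R : realType) (X : topologicalType) (I : set (X -> R)) :
  tychonoff_space R X -> Tpp_minimal_ideal I ->
  exists e : X -> R,
    [/\ Tpp e, (forall x, e x * e x = e x), I = Tpp_gen e &
        exists x0 : X, ~` Zset e = [set x0]].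
Proof.
move=> tX Imi; have [[ITpp _ _ _ IM] [f [If fnz]] _] := Imi.
have [x0 fx0] : exists x0, f x0 != 0.
  apply/not_existsP => f0; apply/fnz/funext => x.
  by apply/eqP/negPn/negP; exact: f0.
have [h [Th fE]] := minimal_ideal_regular Imi If fx0.
pose e x := h x * f x.
have Ie : I e by exact: IM.
have ex0 : e x0 != 0 by apply: contraNneq fx0; rewrite fE /e mulrA => ->; rewrite mul0r.
exists e; split.
- exact: ITpp.
- by move=> x; rewrite /e {3}fE; ring.
- exact: minimal_ideal_principal Imi Ie ex0.
- exists x0; apply/seteqP; split=> y /=; last by move=> ->; exact/eqP.
  by move/eqP; exact: (minimal_ideal_support tX Imi Ie Ie ex0).
Qed.
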